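(* Suppose $(\gamma^\sharp,\lambda^\sharp)$ is an eligible pair. Let $\lambda_{\rm Lasso}>\lambda^\sharp$ with $\lambda_{\rm Lasso}\|\gamma^\sharp\|_1\to0$, and let $$\gamma_{\rm Lasso}:=\arg\min_{c\in\mathbb{R}^{p-1}}\big\{\mathbb{E}(\mathbf{x}_1-\mathbf{x}_{-1}c)^2+2\lambda_{\rm Lasso}\|c\|_1\big\}$$ be the noiseless Lasso. Then $\|\Sigma_{-1,-1}^{1/2}(\gamma_{\rm Lasso}-\gamma^\sharp)\|_2^2\to0$. In addition, if $\lambda_{\rm Lasso}\ge2\lambda^\sharp$, then $(\gamma_{\rm Lasso},\lambda_{\rm Lasso})$ is an eligible pair.
   Context: Asymptotic framework: all quantities may depend on $n$; limits as $n\to\infty$. $\mathbf{x}=(\mathbf{x}_1,\dots,\mathbf{x}_p)$ is a zero-mean Gaussian row vector with nonsingular covariance $\Sigma$ (diagonal entries $1$, smallest eigenvalue bounded away from zero); $\mathbf{x}_{-1}=(\mathbf{x}_2,\dots,\mathbf{x}_p)$, $\Sigma_{-1,-1}=\mathbb{E}\mathbf{x}_{-1}^T\mathbf{x}_{-1}$, $\gamma^0:=\Sigma_{-1,-1}^{-1}\mathbb{E}\mathbf{x}_{-1}^T\mathbf{x}_1$. A pair $(\gamma,\lambda)$ with $\gamma\in\mathbb{R}^{p-1}$, $\lambda>0$ is eligible if $\|\Sigma_{-1,-1}(\gamma-\gamma^0)\|_\infty\le\lambda$ and $\lambda\|\gamma\|_1\to0$. *)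

From HB Require Import structures.
From mathcomp Require Import all_boot all_order all_algebra.
From mathcomp Require Import all_classical all_reals all_analysis.
Set Implicit Arguments.
Unset Strict Implicit.
Unset Printing Implicit Defensive.
Import Order.TTheory GRing.Theory Num.Theory.
Import numFieldNormedType.Exports.
Local Open Scope classical_set_scope.
Local Open Scope ring_scope.

(* Coordinates: x = (x_1, x_{-1}) with x_{-1} of dimension q = p - 1, so the
   covariance Sigma is a (1 + q) x (1 + q) matrix; vectors gamma are columns. *)

Section Defs.
Variable R : realType.

Definition l1norm q (v : 'cV[R]_q) : R := \sum_(i < q) `|v i 0|.
Definition supnorm q (v : 'cV[R]_q) : R := \big[Num.max/0]_(i < q) `|v i 0|.

(* quadratic form v^T A v ; for A = Sigma_{-1,-1}, this is
   ||Sigma_{-1,-1}^{1/2} v||_2^2 *)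
Definition qform q (A : 'M[R]_q) (v : 'cV[R]_q) : R := (v^T *m A *m v) 0 0.

Definition Sigma_mm q (S : 'M[R]_(1 + q)) : 'M[R]_q := drsubmx S.
Definition Sigma_m1 q (S : 'M[R]_(1 + q)) : 'cV[R]_q := dlsubmx S.
Definition Sigma_1m q (S : 'M[R]_(1 + q)) : 'rV[R]_q := ursubmx S.
Definition Sigma_11 q (S : 'M[R]_(1 + q)) : R := ulsubmx S 0 0.

Definition gamma0 q (S : 'M[R]_(1 + q)) : 'cV[R]_q :=
  invmx (Sigma_mm S) *m Sigma_m1 S.

(* E (x_1 - x_{-1} c)^2 + 2 lam ||c||_1, the expectation written out in
   terms of the covariance of the zero-mean vector x *)
Definition lasso_obj q (S : 'M[R]_(1 + q)) (lam : R) (c : 'cV[R]_q) : R :=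
  Sigma_11 S - 2 * (Sigma_1m S *m c) 0 0 + qform (Sigma_mm S) c
  + 2 * lam * l1norm c.

(* Standing assumptions on the sequence of covariance matrices:
   symmetric, unit diagonal, smallest eigenvalue bounded below by a
   constant c > 0 uniformly in n (Rayleigh-quotient form). *)
Definition cov_model (q : nat -> nat) (S : forall n, 'M[R]_(1 + q n)) : Prop :=
  (forall n, (S n)^T = S n) /\
  (forall n (i : 'I_(1 + q n)), S n i i = 1) /\
  (exists c : R, 0 < c /\
     forall n (v : 'cV[R]_(1 + q n)), c * (v^T *m v) 0 0 <= qform (S n) v).

Definition eligible (q : nat -> nat) (S : forall n, 'M[R]_(1 + q n))
  (g : forall n, 'cV[R]_(q n)) (lam : nat -> R) : Prop :=
  (forall n, 0 < lam n) /\
  (forall n, supnorm (Sigma_mm (S n) *m (g n - gamma0 (S n))) <= lam n) /\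
  ((fun n => lam n * l1norm (g n)) @ \oo --> (0 : R)).

End Defs.

From HB Require Import structures.
From mathcomp Require Import all_boot all_order all_algebra.
From mathcomp Require Import all_classical all_reals all_analysis.
From mathcomp Require Import lra.
Set Implicit Arguments.
Unset Strict Implicit.
Unset Printing Implicit Defensive.
Import Order.TTheory GRing.Theory Num.Theory.
Import numFieldNormedType.Exports.
Local Open Scope classical_set_scope.
Local Open Scope ring_scope.

(* Write A = Sigma_{-1,-1} and b = E x_{-1}^T x_1.  Expanding the objective,
     obj (c + d) = obj c + d^T A d + 2 d^T (A c - b)
                   + 2 lam (|c + d|_1 - |c|_1).
   With c = gamma# and c + d = gamma_Lasso, minimality and
   |d^T (A gamma# - b)| <= |d|_1 lam# give the basic inequality
     d^T A d + 2 lam |gamma_L|_1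
       <= 2 lam |gamma#|_1 + 2 lam# (|gamma_L|_1 + |gamma#|_1),
   so d^T A d <= 4 lam |gamma#|_1, and lam |gamma_L|_1 <= 3 lam |gamma#|_1 when
   lam >= 2 lam#.  With c = gamma_Lasso and d along a coordinate axis, the
   first-order condition gives |A gamma_L - b|_oo <= lam.  The eigenvalue bound
   makes A invertible, so A v - b = A (v - gamma0). *)

Section Norms.
Variables (R : realType) (q : nat).
Implicit Types (u v : 'cV[R]_q).

Lemma mx11D (M N : 'M[R]_1) : (M + N) 0 0 = M 0 0 + N 0 0.
Proof. by rewrite mxE. Qed.

Lemma mx11B (M N : 'M[R]_1) : (M - N) 0 0 = M 0 0 - N 0 0.
Proof. by rewrite !mxE. Qed.

Lemma mx11_tr (M : 'M[R]_1) : M^T 0 0 = M 0 0.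
Proof. by rewrite mxE. Qed.

Lemma dotC u v : (u^T *m v) 0 0 = (v^T *m u) 0 0.
Proof. by rewrite -mx11_tr trmx_mul trmxK. Qed.

Lemma l1norm_ge0 v : 0 <= l1norm v.
Proof. exact: sumr_ge0. Qed.

Lemma l1normD u v : l1norm (u + v) <= l1norm u + l1norm v.
Proof.
rewrite /l1norm -big_split /=; apply: ler_sum => i _; rewrite mxE.
exact: ler_normD.
Qed.

Lemma l1normB u v : l1norm (u - v) <= l1norm u + l1norm v.
Proof.
rewrite /l1norm -big_split /=; apply: ler_sum => i _; rewrite !mxE.
exact: ler_normB.
Qed.

Lemma l1norm_scale_delta (t : R) (i : 'I_q) :
  l1norm (t *: delta_mx i 0) = `|t|.
Proof.
rewrite /l1norm (bigD1 i) //= big1 ?addr0; first by rewrite !mxE !eqxx mulr1.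
by move=> j /negbTE ji; rewrite !mxE ji mulr0 normr0.
Qed.

Lemma ler_supnorm v i : `|v i 0| <= supnorm v.
Proof. exact: le_bigmax. Qed.

Lemma supnorm_ge0 v : 0 <= supnorm v.
Proof.
by rewrite /supnorm; elim/big_ind: _ => // x y x0 _; rewrite le_max x0.
Qed.

Lemma supnorm_le v l : 0 <= l -> (forall i, `|v i 0| <= l) -> supnorm v <= l.
Proof. by move=> l0 vl; apply: bigmax_le. Qed.

Lemma dot_le_l1norm_supnorm u v : `|(u^T *m v) 0 0| <= l1norm u * supnorm v.
Proof.
rewrite mxE /l1norm mulr_suml; apply: le_trans (ler_norm_sum _ _ _) _.
apply: ler_sum => i _; rewrite mxE normrM.
exact: ler_wpM2l (ler_supnorm v i).
Qed.

Lemma dot_self_ge0 v : 0 <= (v^T *m v) 0 0.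
Proof. by rewrite mxE; apply: sumr_ge0 => i _; rewrite mxE -expr2 sqr_ge0. Qed.

Lemma dot_self_gt0 v : v != 0 -> 0 < (v^T *m v) 0 0.
Proof.
move=> v0; rewrite lt_def dot_self_ge0 andbT; apply: contraNneq v0 => vv0.
have sq_ge0 i : 0 <= v i 0 * v i 0 by rewrite -expr2 sqr_ge0.
have sq0 := psumr_eq0P (fun i (_ : true) => sq_ge0 i).
apply/eqP/matrixP => i j; rewrite (ord1 j) mxE.
apply/eqP; rewrite -[_ == 0]orbb -mulf_eq0; apply/eqP/sq0 => //.
by rewrite mxE in vv0; apply: etrans vv0; apply: eq_bigr => k _; rewrite mxE.
Qed.

Lemma dot_scale_delta (t : R) (i : 'I_q) v :
  ((t *: delta_mx i (0 : 'I_1))^T *m v) 0 0 = t * v i 0.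
Proof. by rewrite linearZ /= -scalemxAl trmx_delta -rowE !mxE. Qed.

Lemma dot_col_mx0 (w : 'cV[R]_q) :
  ((col_mx (0 : 'cV[R]_1) w)^T *m col_mx 0 w) 0 0 = (w^T *m w) 0 0.
Proof. by rewrite tr_col_mx mul_row_col trmx0 mul0mx add0r. Qed.

End Norms.

Section QuadraticForm.
Variables (R : realType) (q : nat) (A : 'M[R]_q).
Implicit Types (u v : 'cV[R]_q).

Lemma qformZ (t : R) v : qform A (t *: v) = t * t * qform A v.
Proof.
by rewrite /qform linearZ /= [(t *: v)^T]linearZ /= -!scalemxAl !mxE mulrA.
Qed.

Lemma qform_scale_delta (t : R) (i : 'I_q) :
  qform A (t *: delta_mx i 0) = t * t * A i i.
Proof. by rewrite qformZ /qform trmx_delta -rowE -colE !mxE. Qed.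

Lemma qformD_sym u v : A^T = A ->
  qform A (u + v) = qform A u + qform A v + 2 * (v^T *m (A *m u)) 0 0.
Proof.
move=> sA; have cross : (u^T *m A *m v) 0 0 = (v^T *m A *m u) 0 0.
  by rewrite -mx11_tr !trmx_mul trmxK sA mulmxA.
rewrite /qform mulmxA linearD /= [(u + v)^T]linearD /= !mulmxDl !mx11D cross.
lra.
Qed.

Lemma unitmx_of_qform_gt0 : (forall v, v != 0 -> 0 < qform A v) ->
  A \in unitmx.
Proof.
move=> Apd; rewrite unitmxE unitfE; apply/negP => /det0P [v v0 vA].
have := Apd v^T; rewrite trmx_eq0 v0 /qform trmxK vA mul0mx mxE ltxx.
by move/(_ isT).
Qed.

Section LowerBound.
Variable c : R.
Hypothesis qform_lb : forall v, c * (v^T *m v) 0 0 <= qform A v.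

Lemma qform_ge0_of_lb v : 0 <= c -> 0 <= qform A v.
Proof.
by move=> c0; apply: le_trans (qform_lb v); rewrite mulr_ge0 ?dot_self_ge0.
Qed.

Lemma unitmx_of_qform_lb : 0 < c -> A \in unitmx.
Proof.
move=> c0; apply: unitmx_of_qform_gt0 => v v0.
by apply: lt_le_trans (qform_lb v); rewrite mulr_gt0 ?dot_self_gt0.
Qed.

End LowerBound.

End QuadraticForm.

Section FirstOrder.
Variable R : realFieldType.

Lemma le_of_quad_bound (a u l : R) :
  (forall t, 0 < t -> t * u <= t * t * a + t * l) -> u <= l.
Proof.
move=> Hquad; apply/ler_addgt0Pr => e e0.
pose t := e / (`|a| + 1).
have a1_gt0 : 0 < `|a| + 1 by rewrite ltr_wpDl.
have t_gt0 : 0 < t by rewrite divr_gt0.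
have ta_le : t * a <= e.
  apply: le_trans (_ : t * (`|a| + 1) <= e).
    by rewrite ler_pM2l // ler_wpDr // ler_norm.
  by rewrite /t mulrAC -mulrA divff ?mulr1 // gt_eqF.
have := Hquad t t_gt0; rewrite -mulrA -mulrDr ler_pM2l //; lra.
Qed.

Lemma norm_le_of_quad_bound (a u l : R) :
  (forall t, 0 <= t * t * a + 2 * t * u + 2 * l * `|t|) -> `|u| <= l.
Proof.
move=> Hquad; rewrite ler_norml; apply/andP; split.
  rewrite lerNl; apply: (le_of_quad_bound (a := a / 2)) => t t0.
  by have := Hquad t; rewrite gtr0_norm //; lra.
apply: (le_of_quad_bound (a := a / 2)) => t t0.
by have := Hquad (- t); rewrite normrN gtr0_norm //; lra.
Qed.

End FirstOrder.

Section Covariance.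
Variables (R : realType) (q : nat) (S : 'M[R]_(1 + q)).
Hypothesis S_sym : S^T = S.

Lemma Sigma_mm_sym : (Sigma_mm S)^T = Sigma_mm S.
Proof. by rewrite /Sigma_mm trmx_drsub S_sym. Qed.

Lemma Sigma_1mE : Sigma_1m S = (Sigma_m1 S)^T.
Proof.
by apply: trmx_inj; rewrite /Sigma_1m /Sigma_m1 trmx_ursub S_sym trmxK.
Qed.

Lemma qform_Sigma_mm (w : 'cV[R]_q) :
  qform (Sigma_mm S) w = qform S (col_mx 0 w).
Proof.
rewrite /qform tr_col_mx -[S in RHS]submxK mul_row_block mul_row_col.
by rewrite trmx0 !mul0mx mulmx0 !add0r.
Qed.

Lemma Sigma_mm_mul_sub_gamma0 (v : 'cV[R]_q) : Sigma_mm S \in unitmx ->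
  Sigma_mm S *m (v - gamma0 S) = Sigma_mm S *m v - Sigma_m1 S.
Proof. by move=> unitA; rewrite /gamma0 mulmxBr mulmxA mulmxV // mul1mx. Qed.

Lemma Sigma_mm_qform_lb (c : R) :
  (forall v, c * (v^T *m v) 0 0 <= qform S v) ->
  forall w, c * (w^T *m w) 0 0 <= qform (Sigma_mm S) w.
Proof. by move=> S_lb w; rewrite qform_Sigma_mm -dot_col_mx0. Qed.

End Covariance.

Section Lasso.
Variables (R : realType) (q : nat) (S : 'M[R]_(1 + q)) (lam : R).
Hypothesis S_sym : S^T = S.
Local Notation A := (Sigma_mm S).
Local Notation b := (Sigma_m1 S).

Lemma lasso_objDr (g d : 'cV[R]_q) :
  lasso_obj S lam (g + d) = lasso_obj S lam g + qform A d
    + 2 * (d^T *m (A *m g - b)) 0 0 + 2 * lam * (l1norm (g + d) - l1norm g).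
Proof.
rewrite /lasso_obj qformD_sym ?Sigma_mm_sym // Sigma_1mE // mulmxBr mulmxDr.
rewrite mx11B !mx11D [(b^T *m d) 0 0]dotC; lra.
Qed.

Variable g : 'cV[R]_q.
Hypothesis g_min : forall c, lasso_obj S lam g <= lasso_obj S lam c.

Lemma lasso_basic_ineq (g' : 'cV[R]_q) :
  qform A (g - g') + 2 * lam * l1norm g
  <= 2 * lam * l1norm g' + 2 * supnorm (A *m g' - b) * (l1norm g + l1norm g').
Proof.
have gE : g = g' + (g - g') by rewrite addrC subrK.
have := g_min g'; rewrite [in X in X <= _]gE lasso_objDr -gE.
have := dot_le_l1norm_supnorm (g - g') (A *m g' - b); rewrite ler_norml.
have : l1norm (g - g') * supnorm (A *m g' - b)
       <= (l1norm g + l1norm g') * supnorm (A *m g' - b).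
  by rewrite ler_wpM2r ?supnorm_ge0 ?l1normB.
lra.
Qed.

Lemma lasso_kkt : 0 <= lam -> supnorm (A *m g - b) <= lam.
Proof.
move=> lam0; apply: supnorm_le => // i.
apply: (norm_le_of_quad_bound (a := A i i)) => t.
pose d := t *: delta_mx i (0 : 'I_1).
have := g_min (g + d); rewrite lasso_objDr qform_scale_delta dot_scale_delta.
have : lam * l1norm (g + d) <= lam * (l1norm g + `|t|).
  by rewrite ler_wpM2l // -(l1norm_scale_delta t i) l1normD.
lra.
Qed.

Variables (g' : 'cV[R]_q) (lam' : R).
Hypothesis g'_dual : supnorm (A *m g' - b) <= lam'.

Lemma lasso_qform_le : lam' <= lam -> qform A (g - g') <= 4 * (lam * l1norm g').
Proof.
move=> lam'_le; have := lasso_basic_ineq g'.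
have := l1norm_ge0 g; have := l1norm_ge0 g'.
have : supnorm (A *m g' - b) * (l1norm g + l1norm g')
       <= lam * (l1norm g + l1norm g').
  by rewrite ler_wpM2r ?addr_ge0 ?l1norm_ge0 ?(le_trans g'_dual).
lra.
Qed.

Lemma lasso_l1norm_le : (forall v, 0 <= qform A v) -> 2 * lam' <= lam ->
  lam * l1norm g <= 3 * (lam * l1norm g').
Proof.
move=> A_psd lam'_le; have := lasso_basic_ineq g'; have := A_psd (g - g').
have : 2 * supnorm (A *m g' - b) * (l1norm g + l1norm g')
       <= lam * (l1norm g + l1norm g').
  by rewrite ler_wpM2r ?addr_ge0 ?l1norm_ge0 // (le_trans _ lam'_le) ?ler_pM2l.
lra.
Qed.

End Lasso.

Lemma cvg0_squeeze (R : realType) (u v : nat -> R) (k : R) :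
  (forall n, 0 <= u n <= k * v n) -> v @ \oo --> 0 -> u @ \oo --> 0.
Proof.
move=> uv v0; apply: (@squeeze_cvgr _ _ _ _ (fun=> 0) (fun n => k * v n)).
- exact: nearW.
- exact: cvg_cst.
- by rewrite -(mulr0 k); apply: cvgMr.
Qed.

Theorem lemma3p2 (R : realType) (q : nat -> nat)
  (S : forall n, 'M[R]_(1 + q n))
  (gs : forall n, 'cV[R]_(q n)) (ls : nat -> R)
  (lL : nat -> R) (gL : forall n, 'cV[R]_(q n)) :
  cov_model S ->
  eligible S gs ls ->
  (forall n, ls n < lL n) ->
  (fun n => lL n * l1norm (gs n)) @ \oo --> (0 : R) ->
  (forall n (c : 'cV[R]_(q n)),
      lasso_obj (S n) (lL n) (gL n) <= lasso_obj (S n) (lL n) c) ->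
  ((fun n => qform (Sigma_mm (S n)) (gL n - gs n)) @ \oo --> (0 : R)) /\
  ((forall n, 2 * ls n <= lL n) -> eligible S gL lL).
Proof.
move=> [S_sym [_ [c [c_gt0 S_lb]]]] [ls_gt0 [gs_dual _]] ls_lt gs_l1 gL_min.
have A_lb n := Sigma_mm_qform_lb (S_lb n).
have A_psd n w := qform_ge0_of_lb (A_lb n) w (ltW c_gt0).
have gamma0E n v :=
  Sigma_mm_mul_sub_gamma0 v (unitmx_of_qform_lb (A_lb n) c_gt0).
have gs_dual' n : supnorm (Sigma_mm (S n) *m gs n - Sigma_m1 (S n)) <= ls n.
  by rewrite -gamma0E.
have lL_gt0 n : 0 < lL n := lt_trans (ls_gt0 n) (ls_lt n).
split.
  apply: (cvg0_squeeze (k := 4) _ gs_l1) => n.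
  have := lasso_qform_le (S_sym n) (gL_min n) (gs_dual' n) (ltW (ls_lt n)).
  by rewrite A_psd.
move=> ls_le; split; [|split] => // [n|].
  by rewrite gamma0E (lasso_kkt (S_sym n) (gL_min n) (ltW (lL_gt0 n))).
apply: (cvg0_squeeze (k := 3) _ gs_l1) => n.
rewrite mulr_ge0 ?l1norm_ge0 ?(ltW (lL_gt0 n)) //=.
exact: (lasso_l1norm_le (S_sym n) (gL_min n) (gs_dual' n)).
Qed.
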